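(* Every complex Hilbert space $H$ of finite dimension $n\ge2$ admits a bounded linear operator $T$ and a nontrivial subspace $\mathcal{M}$ of $H$ such that $T$ is $\mathcal{M}$-diskcyclic.
   Context: $\mathbb{D}=\{\alpha\in\mathbb{C}:|\alpha|\le1\}$. A subspace is nontrivial if it is neither $\{0\}$ nor the whole space. $T$ is $\mathcal{M}$-diskcyclic if there is $x\in H$ with $\{\alpha T^mx:\alpha\in\mathbb{D},m=0,1,2,\dots\}\cap\mathcal{M}$ dense in $\mathcal{M}$. *)

From Stdlib Require Import Reals.
Open Scope R_scope.

Record C := mkC { Re : R; Im : R }.
Definition C0 : C := mkC 0 0.
Definition C1 : C := mkC 1 0.
Definition Cadd (a b : C) : C := mkC (Re a + Re b) (Im a + Im b).
Definition Cmul (a b : C) : C :=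
  mkC (Re a * Re b - Im a * Im b) (Re a * Im b + Im a * Re b).
Definition Cconj (a : C) : C := mkC (Re a) (- Im a).
Definition Cmod (a : C) : R := sqrt (Re a * Re a + Im a * Im a).

Record HilbertSpace := {
  V :> Type;
  vadd : V -> V -> V;
  vzero : V;
  vopp : V -> V;
  vscal : C -> V -> V;
  inner : V -> V -> C;
  vadd_assoc : forall x y z, vadd x (vadd y z) = vadd (vadd x y) z;
  vadd_comm : forall x y, vadd x y = vadd y x;
  vadd_0 : forall x, vadd x vzero = x;
  vadd_opp : forall x, vadd x (vopp x) = vzero;
  vscal_assoc : forall a b x, vscal a (vscal b x) = vscal (Cmul a b) x;
  vscal_1 : forall x, vscal C1 x = x;
  vscal_distr_v : forall a x y, vscal a (vadd x y) = vadd (vscal a x) (vscal a y);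
  vscal_distr_s : forall a b x, vscal (Cadd a b) x = vadd (vscal a x) (vscal b x);
  inner_add_l : forall x y z, inner (vadd x y) z = Cadd (inner x z) (inner y z);
  inner_scal_l : forall a x y, inner (vscal a x) y = Cmul a (inner x y);
  inner_conj_sym : forall x y, inner y x = Cconj (inner x y);
  inner_pos : forall x, 0 <= Re (inner x x);
  inner_def : forall x, inner x x = C0 -> x = vzero;
  complete : forall u : nat -> V,
    (forall eps, eps > 0 -> exists N, forall p q, (p >= N)%nat -> (q >= N)%nat ->
       sqrt (Re (inner (vadd (u p) (vopp (u q))) (vadd (u p) (vopp (u q))))) < eps) ->
    exists l : V, forall eps, eps > 0 -> exists N, forall p, (p >= N)%nat ->
       sqrt (Re (inner (vadd (u p) (vopp l)) (vadd (u p) (vopp l)))) < eps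
}.

Arguments vadd {h}. Arguments vzero {h}. Arguments vopp {h}.
Arguments vscal {h}. Arguments inner {h}.

Definition vnorm {H : HilbertSpace} (x : H) : R := sqrt (Re (inner x x)).
Definition vsub {H : HilbertSpace} (x y : H) : H := vadd x (vopp y).

Fixpoint lincomb {H : HilbertSpace} (n : nat) (c : nat -> C) (e : nat -> H) : H :=
  match n with
  | O => vzero
  | S k => vadd (lincomb k c e) (vscal (c k) (e k))
  end.

Definition has_dim (H : HilbertSpace) (n : nat) : Prop :=
  exists e : nat -> H,
    (forall c : nat -> C, lincomb n c e = vzero -> forall i, (i < n)%nat -> c i = C0) /\
    (forall x : H, exists c : nat -> C, x = lincomb n c e).

Definition bounded_linear {H : HilbertSpace} (T : H -> H) : Prop :=
  (forall x y, T (vadd x y) = vadd (T x) (T y)) /\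
  (forall a x, T (vscal a x) = vscal a (T x)) /\
  (exists K : R, forall x, vnorm (T x) <= K * vnorm x).

Definition subspace {H : HilbertSpace} (M : H -> Prop) : Prop :=
  M vzero /\ (forall x y, M x -> M y -> M (vadd x y)) /\
  (forall a x, M x -> M (vscal a x)).

Definition nontrivial {H : HilbertSpace} (M : H -> Prop) : Prop :=
  (exists x, M x /\ x <> vzero) /\ (exists x, ~ M x).

Definition dense_in {H : HilbertSpace} (A M : H -> Prop) : Prop :=
  forall y, M y -> forall eps, eps > 0 -> exists z, A z /\ vnorm (vsub z y) < eps.

Definition disk_orbit {H : HilbertSpace} (T : H -> H) (x : H) (z : H) : Prop :=
  exists (alpha : C) (m : nat), Cmod alpha <= 1 /\ z = vscal alpha (Nat.iter m T x).

Definition M_diskcyclic {H : HilbertSpace} (T : H -> H) (M : H -> Prop) : Prop :=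
  exists x : H, dense_in (fun z => disk_orbit T x z /\ M z) M.

(* Witnesses: T is the homothety x |-> r x for a real r > 1 (here r = 2) and
   M is the line spanned by the first basis vector e_0.
   - A real homothety is linear and bounded, since |c x| = |c| |x|.
   - Linear independence of e_0, e_1 (available because n >= 2) makes the line
     through e_0 nontrivial: e_0 <> 0 and e_1 is not on it.
   - Diskcyclicity holds with the orbit of v itself: every point a v of the
     line equals (a / r^N) T^N v, and |a / r^N| <= 1 once r^N >= |a|.  So the
     disk orbit of v contains the whole line, which is then trivially dense
     in itself. *)
From Pilot Require Import Defs.
From Stdlib Require Import Reals Lra Lia.
Open Scope R_scope.

Definition Creal (t : R) : Defs.C := mkC t 0.

Lemma Cmul_comm (a b : Defs.C) : Cmul a b = Cmul b a.
Proof. destruct a, b; unfold Cmul; simpl; f_equal; ring. Qed.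

Lemma Cmod_mul (a b : Defs.C) : Cmod (Cmul a b) = Cmod a * Cmod b.
Proof.
  destruct a as [ar ai], b as [br bi]; unfold Cmod, Cmul; simpl.
  rewrite <- sqrt_mult by nra. f_equal; ring.
Qed.

Lemma Cmod_Creal (t : R) : 0 <= t -> Cmod (Creal t) = t.
Proof.
  intros Ht; unfold Cmod, Creal; simpl.
  replace (t * t + 0 * 0) with (t * t) by ring. now apply sqrt_square.
Qed.

Section HilbertSpaceFacts.

Variable H : HilbertSpace.

Lemma vscal_C0 (x : H) : vscal Defs.C0 x = vzero.
Proof.
  assert (E : vscal (Cadd Defs.C0 Defs.C0) x = vadd (vscal Defs.C0 x) (vscal Defs.C0 x))
    by apply vscal_distr_s.
  replace (Cadd Defs.C0 Defs.C0) with Defs.C0 in E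
    by (unfold Cadd, Defs.C0; simpl; f_equal; ring).
  set (u := vscal Defs.C0 x) in *.
  transitivity (vadd (vadd u u) (vopp u)).
  - now rewrite <- vadd_assoc, vadd_opp, vadd_0.
  - rewrite <- E. apply vadd_opp.
Qed.

Lemma vnorm_zero : vnorm (@vzero H) = 0.
Proof.
  unfold vnorm. rewrite <- (vscal_C0 vzero) at 1.
  rewrite inner_scal_l; simpl. replace (0 * _ - 0 * _) with 0 by ring.
  apply sqrt_0.
Qed.

Lemma inner_self_real (x : H) : Im (inner x x) = 0.
Proof.
  pose proof (inner_conj_sym H x x) as E.
  destruct (inner x x) as [r i]; injection E; simpl; lra.
Qed.

Lemma vnorm_scal (a : Defs.C) (x : H) : vnorm (vscal a x) = Cmod a * vnorm x.
Proof.
  unfold vnorm, Cmod.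
  rewrite inner_scal_l, inner_conj_sym, inner_scal_l.
  pose proof (inner_self_real x) as Hi. pose proof (inner_pos H x) as Hp.
  destruct (inner x x) as [r i]; simpl in *; subst i.
  rewrite <- sqrt_mult by nra. f_equal.
  destruct a as [ar ai]; simpl; ring.
Qed.

Lemma iter_homothety (t : R) (m : nat) (x : H) :
  Nat.iter m (vscal (Creal t)) x = vscal (Creal (t ^ m)) x.
Proof.
  induction m as [|m IH]; simpl.
  - symmetry. apply vscal_1.
  - rewrite IH, vscal_assoc. f_equal. unfold Cmul, Creal; simpl; f_equal; ring.
Qed.

Lemma homothety_bounded_linear (c : Defs.C) : bounded_linear (@vscal H c).
Proof.
  split; [|split].
  - intros x y. apply vscal_distr_v.
  - intros a x. now rewrite !vscal_assoc, Cmul_comm.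
  - exists (Cmod c). intros x. rewrite vnorm_scal. lra.
Qed.

Definition line (v : H) (y : H) : Prop := exists a : Defs.C, y = vscal a v.

Lemma line_subspace (v : H) : subspace (line v).
Proof.
  split; [|split].
  - exists Defs.C0. symmetry. apply vscal_C0.
  - intros x y [a ->] [b ->]. exists (Cadd a b). symmetry. apply vscal_distr_s.
  - intros a x [b ->]. exists (Cmul a b). apply vscal_assoc.
Qed.

Lemma line_nontrivial (v w : H) : v <> vzero -> ~ line v w -> nontrivial (line v).
Proof.
  intros Hv Hw. split.
  - exists v. split; [exists Defs.C1; symmetry; apply vscal_1 | exact Hv].
  - now exists w.
Qed.

(* For a real r > 1, the disk orbit of v under x |-> r x contains the line
   through v: a v = (a / r^N) r^N v with |a / r^N| <= 1 for r^N >= |a|. *)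
Lemma line_in_disk_orbit (r : R) (v y : H) :
  1 < r -> line v y -> disk_orbit (vscal (Creal r)) v y.
Proof.
  intros Hr [a ->].
  destruct (Pow_x_infinity r ltac:(rewrite Rabs_pos_eq; lra) (Cmod a)) as [N HN].
  specialize (HN N (le_n N)). rewrite Rabs_pos_eq in HN by (apply pow_le; lra).
  assert (HrN : 0 < r ^ N) by (apply pow_lt; lra).
  exists (Cmul (Creal (/ r ^ N)) a), N. split.
  - rewrite Cmod_mul, Cmod_Creal by (left; now apply Rinv_0_lt_compat).
    apply (Rmult_le_reg_l (r ^ N)); [exact HrN|].
    rewrite <- Rmult_assoc, Rinv_r by lra. lra.
  - rewrite iter_homothety, vscal_assoc. f_equal.
    destruct a as [ar ai]; unfold Cmul, Creal; simpl; f_equal; field; lra.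
Qed.

Lemma homothety_line_diskcyclic (r : R) (v : H) :
  1 < r -> M_diskcyclic (vscal (Creal r)) (line v).
Proof.
  intros Hr. exists v. intros y Hy eps Heps. exists y. split.
  - split; [now apply line_in_disk_orbit | exact Hy].
  - unfold vsub. rewrite vadd_opp, vnorm_zero. exact Heps.
Qed.

Lemma lincomb_two_support (c : nat -> Defs.C) (e : nat -> H) (k : nat) :
  (forall i, (2 <= i)%nat -> c i = Defs.C0) ->
  lincomb (k + 2) c e = vadd (vscal (c 0%nat) (e 0%nat)) (vscal (c 1%nat) (e 1%nat)).
Proof.
  intros Hc. induction k as [|k IH].
  - simpl. now rewrite (vadd_comm H vzero), vadd_0.
  - simpl (S k + 2)%nat; simpl lincomb; simpl lincomb in IH.
    rewrite IH, (Hc (k + 2)%nat) by lia. now rewrite vscal_C0, vadd_0.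
Qed.

Lemma first_two_independent (n : nat) (e : nat -> H) :
  (2 <= n)%nat ->
  (forall c : nat -> Defs.C, lincomb n c e = vzero -> forall i, (i < n)%nat -> c i = Defs.C0) ->
  forall a b : Defs.C,
    vadd (vscal a (e 0%nat)) (vscal b (e 1%nat)) = vzero -> a = Defs.C0 /\ b = Defs.C0.
Proof.
  intros Hn Hind a b Hab.
  set (c := fun i : nat => match i with 0%nat => a | 1%nat => b | _ => Defs.C0 end).
  assert (Hc : lincomb n c e = vzero).
  { replace n with ((n - 2) + 2)%nat by lia.
    rewrite lincomb_two_support; [exact Hab|].
    intros [|[|i]] Hi; [lia|lia|reflexivity]. }
  split; [apply (Hind c Hc 0%nat) | apply (Hind c Hc 1%nat)]; lia.
Qed.

Lemma basis_line_nontrivial (n : nat) (e : nat -> H) :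
  (2 <= n)%nat ->
  (forall c : nat -> Defs.C, lincomb n c e = vzero -> forall i, (i < n)%nat -> c i = Defs.C0) ->
  nontrivial (line (e 0%nat)).
Proof.
  intros Hn Hind. apply (line_nontrivial _ (e 1%nat)).
  - intros E0.
    destruct (first_two_independent n e Hn Hind Defs.C1 Defs.C0) as [F _].
    + now rewrite E0, vscal_1, vscal_C0, vadd_0.
    + injection F; lra.
  - intros [a Ea].
    destruct (first_two_independent n e Hn Hind a (mkC (-1) 0)) as [_ F].
    + rewrite Ea, vscal_assoc, <- vscal_distr_s.
      replace (Cadd a (Cmul (mkC (-1) 0) a)) with Defs.C0; [apply vscal_C0|].
      destruct a; unfold Cadd, Cmul, Defs.C0; simpl; f_equal; ring.
    + injection F; lra.
Qed.

End HilbertSpaceFacts.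

Theorem mainTheorem10 :
  forall (H : HilbertSpace) (n : nat), (2 <= n)%nat -> has_dim H n ->
  exists (T : H -> H) (M : H -> Prop),
    bounded_linear T /\ subspace M /\ nontrivial M /\ M_diskcyclic T M.
Proof.
  intros H n Hn [e [Hind _]].
  exists (vscal (Creal 2)), (line H (e 0%nat)).
  split; [|split; [|split]].
  - apply homothety_bounded_linear.
  - apply line_subspace.
  - exact (basis_line_nontrivial H n e Hn Hind).
  - apply homothety_line_diskcyclic. lra.
Qed.
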